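(* Let $n \geq 1$ and $m \geq 1$ be integers. The corona graph $P_n \circ P_m$ is a total edge product cordial graph, except when $n = m = 1$ (in which case it is not).
   Context: All graphs are finite and simple. $P_k$ denotes the path on $k$ vertices. For graphs $G$ and $H$ with $V(G)=\{u_1,\dots,u_n\}$, the corona graph $G \circ H$ is obtained by taking one copy of $G$ and $n$ disjoint copies $H^1,\dots,H^n$ of $H$, and joining each vertex $u_i$ by an edge to every vertex of $H^i$. Given an edge labeling $f^*: E(G) \to \{0,1\}$, the induced vertex labeling $f: V(G)\to\{0,1\}$ is $f(v) = \prod\{f^*(uv) : uv \in E(G)\}$ (product of the labels of edges incident to $v$). Let $v_f(i)$ be the number of vertices with $f(v)=i$ and $e_f(i)$ the number of edges with $f^*(e)=i$, for $i=0,1$. The labeling $f^*$ is a total edge product cordial labeling if $|(v_f(0)+e_f(0)) - (v_f(1)+e_f(1))| \leq 1$, and a graph is total edge product cordial if it admits such a labeling. *)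

From mathcomp Require Import all_boot.
Set Implicit Arguments. Unset Strict Implicit. Unset Printing Implicit Defensive.

(* A finite simple graph is given by a vertex finType T and a symmetric,
   irreflexive adjacency relation adj : rel T. *)

Definition path_adj (k : nat) : rel 'I_k :=
  fun i j => (i.+1 == j :> nat) || (j.+1 == i :> nat).

(* Corona G o H: vertices of G (inl u) plus one copy of H for each vertex u
   of G (inr (u, h)); u is joined to every vertex of its copy H^u. *)
Definition corona_adj (T U : finType) (G : rel T) (H : rel U) : rel (T + T * U) :=
  fun x y =>
    match x, y with
    | inl u, inl v => G u v
    | inr (u, a), inr (v, b) => (u == v) && H a b
    | inl u, inr (v, _) => u == v
    | inr (u, _), inl v => u == v
    end.

Definition edges (T : finType) (adj : rel T) : {set {set T}} :=
  [set e : {set T} | [exists x : T, exists y : T, adj x y && (e == [set x; y])]].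

(* Induced vertex label: product (over {0,1}, i.e. conjunction) of the labels
   of the edges incident to v. *)
Definition vlab (T : finType) (adj : rel T) (f : {set T} -> bool) (v : T) : bool :=
  \big[andb/true]_(e in edges adj | v \in e) f e.

Definition v_f (T : finType) (adj : rel T) (f : {set T} -> bool) (i : bool) : nat :=
  #|[set v : T | vlab adj f v == i]|.

Definition e_f (T : finType) (adj : rel T) (f : {set T} -> bool) (i : bool) : nat :=
  #|[set e in edges adj | f e == i]|.

(* f is a total edge product cordial labeling:
   |(v_f(0)+e_f(0)) - (v_f(1)+e_f(1))| <= 1  (false = 0, true = 1). *)
Definition tepc_labeling (T : finType) (adj : rel T) (f : {set T} -> bool) : Prop :=
  let a := v_f adj f false + e_f adj f false in
  let b := v_f adj f true + e_f adj f true in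
  (a <= b + 1) /\ (b <= a + 1).

Definition tepc_graph (T : finType) (adj : rel T) : Prop :=
  exists f : {set T} -> bool, tepc_labeling adj f.

From mathcomp Require Import all_boot zify.
Set Implicit Arguments. Unset Strict Implicit. Unset Printing Implicit Defensive.

(* Give label 0 exactly to the edges of a set F.  The vertices labelled 0 are
   then those covered by F, so v_f(0) + e_f(0) is the weight |F| + |cover F|,
   and it suffices to find an edge set whose weight is half of
   N = |V| + |E| = 3nm + n - 1, up to rounding.

   Sweep the vertices in the order u_1, H^1, u_2, H^2, ...; every vertex but
   u_1 has an earlier neighbour.  If the swept part W is covered by a proper
   subset F of the edges inside W, every weight from |F| + |W| up to
   |E(W)| + |W| is attained by the sets between F and E(W).  Adding the next
   vertex w and the edge xw to an earlier neighbour x to F keeps the cover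
   proper, and the weight of the new F exceeds |E(W)| + |W| by at most one, so
   the new range of weights continues the old one without a gap.  Starting
   from a triangle (m >= 2, weight 5) or from a path on four vertices (m = 1,
   weight 6), the sweep attains every weight up to N.  For P_1 o P_2 and
   P_2 o P_1 a single zero edge is balanced, while P_1 o P_1 is a single edge,
   on which both labellings are unbalanced. *)

Lemma subset_between_card (U : finType) (A B : {set U}) k :
  A \subset B -> #|A| <= k <= #|B| ->
  exists H : {set U}, [/\ A \subset H, H \subset B & #|H| = k].
Proof.
move=> sAB /andP[lo hi].
have /card_geqP[s [uniq_s size_s sBs]] : k - #|A| <= #|B :\: A|.
  by rewrite cardsD (setIidPr sAB); lia.
have sBsA : [set x in s] \subset B :\: A by apply/subsetP => x; rewrite inE => /sBs.
exists (A :|: [set x in s]); split; first exact: subsetUl.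
  by rewrite subUset sAB (subset_trans sBsA) ?subsetDl.
have AIs : A :&: [set x in s] = set0.
  by apply/setP => x; rewrite !inE; apply/negP => /andP[xA /sBs]; rewrite inE xA.
have := cardsUI A [set x in s]; rewrite AIs cards0 addn0 => ->.
by rewrite cardsE (card_uniqP uniq_s); lia.
Qed.

Lemma sum_ord_gt0 k : \sum_(i < k) (0 < i) = k.-1.
Proof.
case: k => [|k]; first by rewrite big_ord0.
by rewrite big_ord_recl add0n (eq_bigr (fun=> 1)) // sum1_card card_ord.
Qed.

Section Labelings.
Variables (T : finType) (adj : rel T).
Implicit Types (F G : {set {set T}}) (W : {set T}).

Lemma edge_set2 x y : adj x y -> [set x; y] \in edges adj.
Proof.
by move=> xy; rewrite inE; apply/existsP; exists x; apply/existsP; exists y; rewrite xy eqxx.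
Qed.

Lemma v_f_sum f : v_f adj f true + v_f adj f false = #|T|.
Proof.
rewrite /v_f -(cardsC [set v | vlab adj f v == true]); congr (_ + _).
by apply: eq_card => v; rewrite !inE; case: (vlab adj f v).
Qed.

Lemma e_f_sum f : e_f adj f true + e_f adj f false = #|edges adj|.
Proof.
rewrite /e_f -(cardsID [set e | f e] (edges adj)); congr (_ + _);
  by apply: eq_card => e; rewrite !inE; case: (f e); rewrite ?andbT ?andbF.
Qed.

Lemma tepc_labeling_zeros f :
  let z := v_f adj f false + e_f adj f false in
  tepc_labeling adj f <->
  #|T| + #|edges adj| <= z.*2 + 1 /\ z.*2 <= #|T| + #|edges adj| + 1.
Proof. by rewrite /tepc_labeling -(v_f_sum f) -(e_f_sum f); split=> -[]; lia. Qed.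

Lemma not_tepc_single_edge :
  edges adj = [set [set: T]] -> 0 < #|T| -> ~ tepc_graph adj.
Proof.
move=> E1 T0 [f /tepc_labeling_zeros[]]; rewrite E1 cards1.
have vlabE v : vlab adj f v = f [set: T].
  rewrite /vlab E1 (eq_bigl (pred1 [set: T])) ?big_pred1_eq // => e.
  by rewrite !inE andb_idr // => /eqP ->; rewrite inE.
have efE : e_f adj f false = ~~ f [set: T].
  rewrite /e_f E1; case fT: (f _) => /=; last first.
    rewrite -(cards1 [set: T]); apply: eq_card => e.
    by rewrite !inE; case: eqP => // ->; rewrite fT.
  apply/eqP; rewrite cards_eq0; apply/eqP/setP => e.
  by rewrite !inE; case: eqP => // ->; rewrite fT.
case fT: (f [set: T]) efE => ->.
- have -> : v_f adj f false = 0.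
    by apply/eqP; rewrite cards_eq0; apply/eqP/setP => v; rewrite !inE vlabE fT.
  lia.
- have -> : v_f adj f false = #|T|.
    by rewrite /v_f -cardsT; apply: eq_card => v; rewrite !inE vlabE fT.
  lia.
Qed.

Definition zero_weight F := #|F| + #|cover F|.

Definition attainable c := exists2 F : {set {set T}}, F \subset edges adj & zero_weight F = c.

Lemma vlab_notin F v : F \subset edges adj ->
  vlab adj (fun e => e \notin F) v = (v \notin cover F).
Proof.
move=> sFE; rewrite /vlab /cover big_all_cond.
apply/allP/negP => [vF /bigcupP[e eF ve]|vF e _].
  by have := vF e (mem_index_enum e); rewrite /= (subsetP sFE e eF) ve eF.
by apply/implyP => /andP[_ ve]; apply/negP => eF; apply: vF; apply/bigcupP; exists e.
Qed.

Lemma tepc_of_attainable c : attainable c ->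
  #|T| + #|edges adj| <= c.*2 + 1 -> c.*2 <= #|T| + #|edges adj| + 1 ->
  tepc_graph adj.
Proof.
move=> [F sFE <-] lo hi; exists (fun e => e \notin F); apply/tepc_labeling_zeros.
suff -> : v_f adj (fun e => e \notin F) false + e_f adj (fun e => e \notin F) false
          = zero_weight F by [].
rewrite addnC; congr (_ + _); apply: eq_card => x; rewrite inE.
- by rewrite eqbF_neg negbK andb_idl // => /(subsetP sFE).
- by rewrite vlab_notin //; case: (x \in cover F).
Qed.

Lemma cover_subset F G : F \subset G -> cover F \subset cover G.
Proof. by move=> sFG; apply/bigcupsP => e eF; apply: bigcup_sup; apply: (subsetP sFG). Qed.

Lemma cover_set2 (e1 e2 : {set T}) : cover [set e1; e2] = e1 :|: e2.
Proof. by rewrite /cover bigcup_setU !big_set1. Qed.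

Lemma attainable_between F G : F \subset G -> G \subset edges adj ->
  cover G \subset cover F ->
  forall c, zero_weight F <= c <= #|G| + #|cover F| -> attainable c.
Proof.
move=> sFG sGE sGF c /andP[lo hi].
have [|H [sFH sHG cardH]] := @subset_between_card _ F G (c - #|cover F|) sFG.
  by move: lo hi; rewrite /zero_weight; lia.
exists H; first exact: subset_trans sGE.
rewrite /zero_weight cardH.
have -> : cover H = cover F.
  apply/eqP; rewrite eqEsubset (cover_subset sFH) andbT.
  exact: subset_trans (cover_subset sHG) sGF.
by move: lo; rewrite /zero_weight; lia.
Qed.

Definition edges_in W := [set e in edges adj | e \subset W].

Lemma edge_set2_in W u v :
  adj u v -> u \in W -> v \in W -> [set u; v] \in edges_in W.
Proof. by move=> uv uW vW; rewrite inE edge_set2 //; apply/subsetP => w /set2P[] ->. Qed.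

Lemma cover_edges_in W : cover (edges_in W) \subset W.
Proof. by apply/bigcupsP => e; rewrite inE => /andP[]. Qed.

Definition sweep_inv W c0 :=
  (exists2 F : {set {set T}}, F \proper edges_in W & cover F = W) /\
  forall c, c0 <= c <= #|edges_in W| + #|W| -> attainable c.

Lemma sweep_inv_base F W : F \proper edges_in W -> cover F = W ->
  sweep_inv W (zero_weight F).
Proof.
move=> ltFW covF; split; first by exists F.
have sFW := proper_sub ltFW.
move=> c; rewrite -{2}covF; apply: attainable_between => //.
  by apply/subsetP => e; rewrite inE => /andP[].
by rewrite covF cover_edges_in.
Qed.

Lemma sweep_inv_add W c0 w x :
  sweep_inv W c0 -> w \notin W -> x \in W -> adj w x -> sweep_inv (w |: W) c0.
Proof.
move=> [[F ltFW covF] attW] wW xW wx; set e0 := [set w; x].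
have e0E : e0 \in edges adj := edge_set2 wx.
have e0W : e0 \notin edges_in W.
  by rewrite inE negb_and; apply/orP; right; apply/subsetPn; exists w; rewrite ?set21.
have sWW' : edges_in W \subset edges_in (w |: W).
  by apply/subsetP => e; rewrite !inE => /andP[-> /subset_trans]; apply; apply: subsetUr.
have e0W' : e0 \in edges_in (w |: W).
  rewrite inE e0E; apply/subsetP => v.
  by rewrite !inE => /orP[] /eqP ->; rewrite ?eqxx ?xW ?orbT.
have covF' : cover (e0 |: F) = w |: W.
  rewrite /cover bigcup_setU big_set1 -/(cover F) covF.
  by apply/setP => v; rewrite !inE -orbA; case: (v =P x) => // ->; rewrite xW !orbT.
have [sFW [g gW gF]] := properP ltFW.
have ltF' : e0 |: F \proper edges_in (w |: W).
  apply/properP; split.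
    by rewrite subUset sub1set e0W' (subset_trans sFW sWW').
  exists g; first exact: (subsetP sWW').
  by rewrite !inE negb_or gF andbT; apply: contraNneq e0W => <-.
split; first by exists (e0 |: F).
have card_e0F : #|e0 |: F| <= #|edges_in W|.
  rewrite cardsU1; have := proper_card ltFW.
  by case: (e0 \notin F) => [|/ltnW]; rewrite ?add1n ?add0n.
move=> c /andP[lo hi]; have [le|gt] := leqP c (#|edges_in W| + #|W|).
  by apply: attW; rewrite lo.
apply: (attainable_between (proper_sub ltF')).
- by apply/subsetP => e; rewrite inE => /andP[].
- by rewrite covF' cover_edges_in.
rewrite /zero_weight covF' hi andbT cardsU1 wW add1n addnS.
by apply: leq_ltn_trans gt; rewrite leq_add2r card_e0F.
Qed.

Lemma sweep_inv_triangle x y z : uniq [:: x; y; z] ->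
  adj x y -> adj x z -> adj y z -> sweep_inv [set x; y; z] 5.
Proof.
rewrite /= !inE !negb_or -!andbA => /and4P[xy xz yz _] axy axz ayz.
pose F := [set [set x; y]; [set x; z]].
have zF : z \notin [set x; y] by rewrite !inE negb_or !(eq_sym z) xz yz.
have covF : cover F = [set x; y; z].
  by rewrite cover_set2; apply/setP => v; rewrite !inE; case: (v == x).
have -> : 5 = zero_weight F.
  rewrite /zero_weight covF cards2 -setUA cardsU1 cards2 !inE negb_or xy xz yz.
  by case: eqP => // /setP/(_ z); rewrite set22 (negPf zF).
apply: sweep_inv_base covF; apply/properP; split.
  by apply/subsetP => e /set2P[] ->; apply: edge_set2_in; rewrite // !inE eqxx ?orbT.
exists [set y; z]; first by apply: edge_set2_in; rewrite // !inE eqxx ?orbT.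
apply/set2P => -[/setP/(_ z)|/setP/(_ y)]; first by rewrite set22 (negPf zF).
by rewrite set21 !inE (negPf yz) eq_sym (negPf xy).
Qed.

Lemma sweep_inv_path4 a b c d : uniq [:: a; b; c; d] ->
  adj a b -> adj b c -> adj c d -> sweep_inv [set a; b; c; d] 6.
Proof.
rewrite /= !inE !negb_or -!andbA.
move=> /and5P[ab ac ad bc /andP[bd /andP[cd _]]] aab abc acd.
pose F := [set [set a; b]; [set c; d]].
have cF : c \notin [set a; b] by rewrite !inE negb_or !(eq_sym c) ac bc.
have covF : cover F = [set a; b; c; d] by rewrite cover_set2 setUA.
have -> : 6 = zero_weight F.
  rewrite /zero_weight covF cards2 -!setUA cardsU1 cardsU1 cards2 !inE !negb_or.
  rewrite ab ac ad bc bd cd.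
  by case: eqP => // /setP/(_ c); rewrite set21 (negPf cF).
apply: sweep_inv_base covF; apply/properP; split.
  by apply/subsetP => e /set2P[] ->; apply: edge_set2_in; rewrite // !inE eqxx ?orbT.
exists [set b; c]; first by apply: edge_set2_in; rewrite // !inE eqxx ?orbT.
apply/set2P => -[/setP/(_ c)|/setP/(_ b)]; first by rewrite set22 (negPf cF).
by rewrite set21 !inE (negPf bc) (negPf bd).
Qed.

Section RankSweep.
Variable r : T -> nat.
Hypothesis r_inj : injective r.

Definition rank_below k := [set v | r v < k].

Definition lower_nbrs v := [set x | adj v x & r x < r v].

Lemma sweep_inv_rank k0 c0 :
  (forall v, k0 <= r v -> 0 < #|lower_nbrs v|) -> sweep_inv (rank_below k0) c0 ->
  forall k, k0 <= k -> sweep_inv (rank_below k) c0.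
Proof.
move=> lowerP base; elim=> [|k IH]; first by rewrite leqn0 => /eqP <-.
rewrite leq_eqVlt ltnS => /orP[/eqP <- //|le_k0k]; have {}IH := IH le_k0k.
case: (pickP [pred v | r v == k]) => [w /eqP rw|none].
  have -> : rank_below k.+1 = w |: rank_below k.
    by apply/setP => v; rewrite !inE ltnS leq_eqVlt -rw (inj_eq r_inj).
  have /card_gt0P[x] : 0 < #|lower_nbrs w| by apply: lowerP; rewrite rw.
  rewrite inE => /andP[wx xw]; apply: (sweep_inv_add IH _ _ wx); rewrite inE -rw //.
  by rewrite ltnn.
have -> // : rank_below k.+1 = rank_below k.
by apply/setP => v; rewrite !inE ltnS leq_eqVlt; have := none v; rewrite /= => ->.
Qed.

Lemma attainable_of_sweep k0 c0 :
  (forall v, k0 <= r v -> 0 < #|lower_nbrs v|) -> sweep_inv (rank_below k0) c0 ->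
  forall c, c0 <= c <= #|T| + #|edges adj| -> attainable c.
Proof.
move=> lowerP base; set K := k0 + \max_v (r v).+1.
have [_] := sweep_inv_rank lowerP base (leq_addr _ k0 : k0 <= K).
have -> : rank_below K = [set: T].
  by apply/setP => v; rewrite !inE ltn_addl // (@leq_bigmax _ (fun v => (r v).+1) v).
have -> : edges_in [set: T] = edges adj by apply/setP => e; rewrite inE subsetT andbT.
by rewrite cardsT addnC.
Qed.

(* Each edge is counted once, at its endpoint of larger rank. *)
Lemma card_edges_rank : symmetric adj -> irreflexive adj ->
  #|edges adj| = \sum_v #|lower_nbrs v|.
Proof.
move=> adj_sym adj_irr.
pose P := [set p : T * T | adj p.1 p.2 & r p.2 < r p.1].
have -> : edges adj = [set [set p.1; p.2] | p in P].
  apply/setP => e; apply/idP/imsetP => [|[p]]; last first.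
    by rewrite inE => /andP[pa _] ->; apply: edge_set2.
  rewrite inE => /existsP[x /existsP[y /andP[xy /eqP ->]]].
  case: (ltngtP (r x) (r y)) => [ltxy|ltyx|/r_inj eqxy].
  - by exists (y, x); rewrite ?inE /= 1?adj_sym ?xy // setUC.
  - by exists (x, y); rewrite ?inE /= ?xy.
  - by move: xy; rewrite eqxy adj_irr.
rewrite card_in_imset; last first.
  move=> [x y] [x' y']; rewrite !inE /= => /andP[_ +] /andP[_ ltyx'] eq_e.
  have [] : x \in [set x'; y'] /\ y \in [set x'; y'] by rewrite -eq_e set21 set22.
  move=> /set2P[]-> /set2P[]-> //; rewrite ?ltnn //.
  by move=> /(ltn_trans ltyx'); rewrite ltnn.
rewrite -sum1_card (eq_bigr (fun v => \sum_(x in lower_nbrs v) 1)) => [|v _]; last first.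
  by rewrite sum1_card.
by rewrite pair_big_dep; apply: eq_bigl => -[v x]; rewrite !inE.
Qed.
End RankSweep.
End Labelings.

Section Corona.
Variables n m : nat.
Local Notation V := ('I_n + 'I_n * 'I_m)%type.
Local Notation adj := (corona_adj (@path_adj n) (@path_adj m)).

Lemma corona_adj_sym : symmetric adj.
Proof. by move=> [x|[x a]] [y|[y b]] //=; rewrite ?(eq_sym x) // /path_adj orbC. Qed.

Lemma corona_adj_irr : irreflexive adj.
Proof. by move=> [x|[x a]] /=; rewrite /path_adj ?eqxx /=; lia. Qed.

Definition corona_rank (v : V) : nat :=
  match v with inl u => u * m.+1 | inr (u, a) => u * m.+1 + a.+1 end.

Lemma edivn_corona_rank v : edivn (corona_rank v) m.+1 =
  match v with inl u => (val u, 0) | inr (u, a) => (val u, a.+1) end.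
Proof.
case: v => [u|[u a]] /=; first by rewrite -[u * m.+1]addn0 edivn_eq.
by rewrite edivn_eq // ltnS.
Qed.

Lemma corona_rank_inj : injective corona_rank.
Proof.
move=> v w /(congr1 (edivn^~ m.+1)); rewrite /= !edivn_corona_rank.
by case: v w => [x|[x a]] [y|[y b]] // [/val_inj-> //] /val_inj->.
Qed.

Local Notation lower := (lower_nbrs adj corona_rank).

Lemma card_lower_nbrs_inl u : #|lower (inl u)| = (0 < u).
Proof.
case: u => -[|u] ltun /=.
  apply/eqP; rewrite cards_eq0; apply/eqP/setP => -[y|[y b]];
    by rewrite !inE /= /path_adj; nia.
rewrite -(cards1 (inl (Ordinal (ltnW ltun)) : V)); apply: eq_card => -[y|[y b]];
  rewrite !inE -sum_eqE /= /path_adj -?val_eqE /=; nia.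
Qed.

Lemma card_lower_nbrs_inr u a : #|lower (inr (u, a))| = (0 < a).+1.
Proof.
case: a => -[|a] ltam /=.
  rewrite -(cards1 (inl u : V)); apply: eq_card => -[y|[y b]];
    rewrite !inE -sum_eqE /= /path_adj -?val_eqE /=; nia.
rewrite -(cards2 (inl u : V) (inr (u, Ordinal (ltnW ltam)))).
apply: eq_card => -[y|[y b]];
  rewrite !inE -!sum_eqE /= ?xpair_eqE /path_adj -?val_eqE /=; nia.
Qed.

Lemma card_corona_edges : #|edges adj| = n.-1 + n * (m + m.-1).
Proof.
rewrite (card_edges_rank corona_rank_inj corona_adj_sym corona_adj_irr) big_sumType /=.
under eq_bigr do rewrite card_lower_nbrs_inl.
rewrite sum_ord_gt0 (eq_bigr (fun p => #|lower (inr (p.1, p.2))|)) => [|[] //].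
rewrite -(pair_bigA _ (fun u a => #|lower (inr (u, a))|)) /=.
under eq_bigr do under eq_bigr do rewrite card_lower_nbrs_inr -add1n.
by rewrite sum_nat_const card_ord big_split sum_ord_gt0 sum1_card card_ord.
Qed.

Lemma card_corona_vertices_edges :
  0 < n -> 0 < m -> #|{: V}| + #|edges adj| = 3 * n * m + n - 1.
Proof. by rewrite card_corona_edges card_sum card_prod !card_ord; nia. Qed.

Lemma corona_lower_nbrs_gt0 v : 0 < corona_rank v -> 0 < #|lower v|.
Proof.
case: v => [u|[u a]] /=; last by rewrite card_lower_nbrs_inr.
by rewrite card_lower_nbrs_inl lt0b muln_gt0 andbT.
Qed.

Lemma corona_tepc_of_attainable c : 0 < n -> 0 < m -> attainable adj c ->
  3 * n * m + n - 1 <= c.*2 + 1 -> c.*2 <= 3 * n * m + n -> tepc_graph adj.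
Proof.
move=> n_gt0 m_gt0 att lo hi.
by apply: (tepc_of_attainable att); rewrite card_corona_vertices_edges //; lia.
Qed.

Lemma corona_tepc_of_sweep k0 c0 : 0 < n -> 0 < m -> 0 < k0 ->
  sweep_inv adj (rank_below corona_rank k0) c0 -> c0.*2 <= 3 * n * m + n ->
  tepc_graph adj.
Proof.
move=> n_gt0 m_gt0 k0_gt0 base c0_le.
have lower_gt0 v : k0 <= corona_rank v -> 0 < #|lower v|.
  by move=> le_k0v; apply: corona_lower_nbrs_gt0; apply: leq_trans le_k0v.
have att := attainable_of_sweep corona_rank_inj lower_gt0 base.
rewrite card_corona_vertices_edges // in att.
have := uphalfK (3 * n * m + n - 1); have := leq_b1 (odd (3 * n * m + n - 1)).
move: (uphalf _) (odd _) => c o le_o1 c2.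
by apply: (corona_tepc_of_attainable _ _ (att c _)) => //; lia.
Qed.

Lemma corona_sweep_inv_triangle (n_gt0 : 0 < n) (m_gt1 : 1 < m) :
  sweep_inv adj (rank_below corona_rank 3) 5.
Proof.
pose u0 := Ordinal n_gt0.
have -> : rank_below corona_rank 3 =
    [set inl u0; inr (u0, Ordinal (ltnW m_gt1)); inr (u0, Ordinal m_gt1)].
  apply/setP => -[y|[y b]]; rewrite !inE -!sum_eqE /= ?xpair_eqE -?val_eqE /=; nia.
by apply: sweep_inv_triangle; rewrite //= /path_adj ?eqxx.
Qed.

Lemma corona_sweep_inv_path4 (n_gt1 : 1 < n) (m1 : m = 1) :
  sweep_inv adj (rank_below corona_rank 4) 6.
Proof.
have m_gt0 : 0 < m by rewrite m1.
pose u0 := Ordinal (ltnW n_gt1); pose u1 := Ordinal n_gt1; pose a0 := Ordinal m_gt0.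
have -> : rank_below corona_rank 4 = [set inr (u0, a0); inl u0; inl u1; inr (u1, a0)].
  apply/setP => -[y|[y b]]; rewrite !inE -!sum_eqE /= ?xpair_eqE -?val_eqE /=.
    by nia.
  by have := ltn_ord b; nia.
by apply: sweep_inv_path4; rewrite //= /path_adj ?eqxx.
Qed.

Lemma corona_attainable3 (n_gt0 : 0 < n) (m_gt0 : 0 < m) : attainable adj 3.
Proof.
pose e := [set inl (Ordinal n_gt0); inr (Ordinal n_gt0, Ordinal m_gt0)] : {set V}.
exists [set e]; first by rewrite sub1set edge_set2 //= eqxx.
by rewrite /zero_weight cover1 cards1 cards2.
Qed.
End Corona.

Lemma not_tepc_corona_P1_P1 : ~ tepc_graph (corona_adj (@path_adj 1) (@path_adj 1)).
Proof.
apply: not_tepc_single_edge; last by apply/card_gt0P; exists (inl ord0).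
have /cards1P[e edgesE] : #|edges (corona_adj (@path_adj 1) (@path_adj 1))| == 1.
  by rewrite card_corona_edges.
rewrite edgesE; congr [set _]; apply/eqP; rewrite eq_sym -in_set1 -edgesE.
have -> : [set: 'I_1 + 'I_1 * 'I_1] = [set inl ord0; inr (ord0, ord0)].
  by apply/setP => -[x|[x a]]; rewrite !inE !ord1.
exact: edge_set2.
Qed.

Theorem theorem3p1 (n m : nat) : 1 <= n -> 1 <= m ->
  (tepc_graph (corona_adj (@path_adj n) (@path_adj m)) <-> ~ (n = 1 /\ m = 1)).
Proof.
move=> n_gt0 m_gt0; split=> [tepc [n1 m1]|not11].
  by subst; exact: not_tepc_corona_P1_P1 tepc.
have [small|large] := leqP (3 * n * m + n) 8.
  by apply: (corona_tepc_of_attainable n_gt0 m_gt0 (corona_attainable3 n_gt0 m_gt0)); nia.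
have [m_le1|m_gt1] := leqP m 1.
  have m1 : m = 1 by apply/eqP; rewrite eqn_leq m_le1.
  have n_gt1 : 1 < n by nia.
  by apply: (corona_tepc_of_sweep n_gt0 m_gt0 _ (corona_sweep_inv_path4 n_gt1 m1)); nia.
by apply: (corona_tepc_of_sweep n_gt0 m_gt0 _ (corona_sweep_inv_triangle n_gt0 m_gt1)); nia.
Qed.
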